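(* Let $X$ be a countably infinite set and let $A$ be a finite set. Then the lattice $\mathrm{Cl}(A)$ of all clones on $A$ is isomorphic to an interval of the lattice $\mathrm{Cl}_{loc}(X)$ of local clones on $X$.
   Context: For a set $Y$ and $n\ge1$, an $n$-ary operation on $Y$ is a map $Y^n\to Y$. A clone on $Y$ is a set of finitary operations on $Y$ containing all projections $\pi^n_k(x_1,\dots,x_n)=x_k$ and closed under composition (if $f$ is $n$-ary in the set and $g_1,\dots,g_n$ are $m$-ary in the set then $f(g_1,\dots,g_n)$ is in the set); $\mathrm{Cl}(Y)$ is the lattice of all clones on $Y$ ordered by inclusion. Giving $X$ the discrete topology and $X^{X^n}$ the product topology, a clone on $X$ is local if for each $n$ its set of $n$-ary operations is closed in $X^{X^n}$; equivalently, an $n$-ary operation $g$ belongs to the clone whenever for every finite $B\subseteq X^n$ some $n$-ary operation of the clone agrees with $g$ on $B$. $\mathrm{Cl}_{loc}(X)$ is the complete lattice of local clones on $X$ ordered by inclusion. An interval of a lattice is a set $\{c: a\le c\le b\}$ for some $a\le b$, with the induced order. *)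

From mathcomp Require Import all_boot.
Set Implicit Arguments. Unset Strict Implicit. Unset Printing Implicit Defensive.

(* An (n+1)-ary operation on Y (arities n >= 1 are indexed by n.+1). *)
Definition op (Y : Type) (n : nat) : Type := ('I_n.+1 -> Y) -> Y.

Definition opset (Y : Type) : Type := forall n : nat, op Y n -> Prop.

Definition opset_le (Y : Type) (C D : opset Y) : Prop :=
  forall n (f : op Y n), C n f -> D n f.

Definition opset_eq (Y : Type) (C D : opset Y) : Prop :=
  forall n (f : op Y n), C n f <-> D n f.

Definition is_clone (Y : Type) (C : opset Y) : Prop :=
  (forall n (k : 'I_n.+1), C n (fun x => x k)) /\
  (forall n m (f : op Y n) (g : 'I_n.+1 -> op Y m),
      C n f -> (forall i, C m (g i)) ->
      C m (fun x => f (fun i => g i x))).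

(* Local clones: closed in the product topology (finite agreement).
   A finite set B of arguments is given as a finite family B : 'I_k -> Y^(n+1). *)
Definition is_local_clone (Y : Type) (C : opset Y) : Prop :=
  is_clone C /\
  forall n (g : op Y n),
    (forall (k : nat) (B : 'I_k -> ('I_n.+1 -> Y)),
        exists f : op Y n, C n f /\ forall j : 'I_k, f (B j) = g (B j)) ->
    C n g.

From mathcomp Require Import all_boot.
From Stdlib Require Import ClassicalEpsilon FunctionalExtensionality.
Set Implicit Arguments. Unset Strict Implicit. Unset Printing Implicit Defensive.

(* Fix an injection iota of A into X.  A clone C on A is sent to the set of
   operations on X that preserve iota(A) and whose restriction to iota(A) lies
   in C.  This map is monotone, and it reflects inclusion because every
   operation on A extends to X.  Its image is the whole interval between the
   images of the projection clone and of the clone of all operations: given a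
   clone D in that interval and f whose restriction c is the restriction of
   some d in D, the operation h(z0, z) = (z0 if z is in iota(A), f z otherwise)
   restricts to a projection, hence lies in D, and f = h(d, id).  Locality
   holds because a finite set of arguments already covers iota(A)^n. *)

Definition transfer (Y Z : Type) (R : forall n, op Y n -> op Z n -> Prop)
    (C : opset Y) : opset Z :=
  fun n g => exists2 f, C n f & R n f g.

Arguments transfer {Y Z} R C n g.

Definition clone_compatible (Y Z : Type) (R : forall n, op Y n -> op Z n -> Prop) :=
  (forall n (k : 'I_n.+1), R n (fun y => y k) (fun z => z k)) /\
  (forall n m (f : op Y n) (g : 'I_n.+1 -> op Y m) (F : op Z n) (G : 'I_n.+1 -> op Z m),
      R n f F -> (forall i, R m (g i) (G i)) ->
      R m (fun y => f (fun i => g i y)) (fun z => F (fun i => G i z))).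

Lemma transfer_clone (Y Z : Type) (R : forall n, op Y n -> op Z n -> Prop) (C : opset Y) :
  clone_compatible R -> is_clone C -> is_clone (transfer R C).
Proof.
move=> [Rproj Rcomp] [Cproj Ccomp]; split=> [n k|n m f g [cf Ccf Rf] Hg].
  by exists (fun y => y k); [apply: Cproj | apply: Rproj].
have [cg Hcg] : exists cg, forall i, C m (cg i) /\ R m (cg i) (g i).
  apply: (ClassicalEpsilon.choice (fun i c => C m c /\ R m c (g i))) => i.
  by have [c Cc Rc] := Hg i; exists c.
exists (fun y => cf (fun i => cg i y)).
  by apply: Ccomp => // i; case: (Hcg i).
by apply: Rcomp => // i; case: (Hcg i).
Qed.

Lemma clone_compatible_flip (Y Z : Type) (R : forall n, op Y n -> op Z n -> Prop) :
  clone_compatible R -> clone_compatible (fun n g f => R n f g).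
Proof.
by move=> [Rproj Rcomp]; split=> [n k|n m f g F G fF gG]; [apply: Rproj | apply: Rcomp].
Qed.

Definition proj_opset (Y : Type) : opset Y := fun n f => exists k, forall y, f y = y k.
Definition full_opset (Y : Type) : opset Y := fun _ _ => True.

Lemma proj_opset_clone (Y : Type) : is_clone (@proj_opset Y).
Proof.
split=> [n k|n m f g [k Hk] Hg]; first by exists k.
by have [j Hj] := Hg k; exists j => y; rewrite Hk Hj.
Qed.

Lemma full_opset_clone (Y : Type) : is_clone (@full_opset Y).
Proof. by []. Qed.

Lemma proj_opset_le_clone (Y : Type) (C : opset Y) :
  is_clone C -> opset_le (@proj_opset Y) C.
Proof.
move=> [Cproj _] n f [k Hk].
by have -> : f = (fun y => y k) by apply: functional_extensionality.
Qed.

Definition ocons (T : Type) n (x : T) (f : 'I_n -> T) : 'I_n.+1 -> T :=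
  fun i => if unlift ord0 i is Some j then f j else x.

Lemma ocons0 (T : Type) n (x : T) (f : 'I_n -> T) : ocons x f ord0 = x.
Proof. by rewrite /ocons unlift_none. Qed.

Lemma oconsS (T : Type) n (x : T) (f : 'I_n -> T) i : ocons x f (lift ord0 i) = f i.
Proof. by rewrite /ocons liftK. Qed.

Section Lifting.

Variables (X A : Type) (iota : A -> X).

Definition restricts_to n (f : op X n) (c : op A n) : Prop :=
  forall a, f (fun i => iota (a i)) = iota (c a).

Definition lift_opset : opset A -> opset X := transfer (fun n c f => restricts_to f c).

Definition restrict_opset : opset X -> opset A := transfer restricts_to.

Lemma restricts_to_compatible : clone_compatible restricts_to.
Proof.
split=> // n m f g F G fF gG a; rewrite -fF; congr f.
by apply: functional_extensionality => i; apply: gG.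
Qed.

Lemma lift_opset_clone (C : opset A) : is_clone C -> is_clone (lift_opset C).
Proof. exact/transfer_clone/clone_compatible_flip/restricts_to_compatible. Qed.

Lemma restrict_opset_clone (D : opset X) : is_clone D -> is_clone (restrict_opset D).
Proof. exact/transfer_clone/restricts_to_compatible. Qed.

Lemma lift_opset_le (C D : opset A) :
  opset_le C D -> opset_le (lift_opset C) (lift_opset D).
Proof. by move=> CD n f [c Cc fc]; exists c => //; apply: CD. Qed.

Lemma le_lift_restrict (D : opset X) :
  opset_le D (lift_opset (@full_opset A)) -> opset_le D (lift_opset (restrict_opset D)).
Proof. by move=> DU n f Df; have [c _ fc] := DU n f Df; exists c => //; exists f. Qed.

Definition switch n (f : op X n) : op X n.+1 :=
  fun z => if excluded_middle_informative
                (exists a, forall i, z (lift ord0 i) = iota (a i))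
           then z ord0 else f (fun i => z (lift ord0 i)).

Lemma switch_restricts_to_proj n (f : op X n) :
  restricts_to (switch f) (fun b => b ord0).
Proof.
move=> b; rewrite /switch; case: excluded_middle_informative => // [[]].
by exists (fun i => b (lift ord0 i)).
Qed.

Lemma switch_ocons n (f d : op X n) (c : op A n) x :
  restricts_to f c -> restricts_to d c ->
  switch f (fun i => ocons d (fun j y => y j) i x) = f x.
Proof.
move=> fc dc; rewrite /switch.
have tail_x : (fun i => ocons d (fun j y => y j) (lift ord0 i) x) = x.
  by apply: functional_extensionality => i; rewrite oconsS.
case: excluded_middle_informative => [[a xa]|_] /=; last by rewrite tail_x.
have -> : x = (fun i => iota (a i)).
  by apply: functional_extensionality => i; rewrite -xa oconsS.
by rewrite ocons0 fc dc.
Qed.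

Lemma lift_restrict_le (D : opset X) :
  is_clone D -> opset_le (lift_opset (@proj_opset A)) D ->
  opset_le (lift_opset (restrict_opset D)) D.
Proof.
move=> [Dproj Dcomp] LD n f [c [d Dd dc] fc].
have Dswitch : D n.+1 (switch f).
  apply: LD; exists (fun b => b ord0); first by exists ord0.
  exact: switch_restricts_to_proj.
have Docons i : D n (ocons d (fun j y => y j) i).
  by rewrite /ocons; case: (unlift ord0 i).
have := Dcomp _ _ _ _ Dswitch Docons.
congr D; apply: functional_extensionality => x; exact: switch_ocons dc.
Qed.

Hypothesis iota_inj : injective iota.

Lemma restricts_to_inj n (f : op X n) (c c' : op A n) :
  restricts_to f c -> restricts_to f c' -> c = c'.
Proof.
move=> fc fc'; apply: functional_extensionality => a.
by apply: iota_inj; rewrite -fc fc'.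
Qed.

Lemma restricts_to_ex (x0 : X) n (c : op A n) : exists f : op X n, restricts_to f c.
Proof.
suff [f Hf] : exists f : op X n, forall x a, x = (fun i => iota (a i)) -> f x = iota (c a).
  by exists f => a; apply: Hf.
apply: (ClassicalEpsilon.choice (fun (x : 'I_n.+1 -> X) y =>
  forall a, x = (fun i => iota (a i)) -> y = iota (c a))) => x.
case: (classic (exists a, x = (fun i => iota (a i)))) => [[a ->]|nx]; last first.
  by exists x0 => a xa; case: nx; exists a.
exists (iota (c a)) => a' aa'; congr (iota (c _)).
apply: functional_extensionality => i; apply: iota_inj.
exact: (congr1 (fun y => y i) aa').
Qed.

Lemma lift_opset_le_iff (x0 : X) (C D : opset A) :
  opset_le C D <-> opset_le (lift_opset C) (lift_opset D).
Proof.
split=> [|CD n c Cc]; first exact: lift_opset_le.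
have [f fc] := restricts_to_ex x0 c.
have [c' Dc' fc'] := CD n f (ex_intro2 _ _ c Cc fc).
by rewrite (restricts_to_inj fc fc').
Qed.

End Lifting.

Arguments lift_opset {X A} iota C n f.

Lemma lift_opset_closed (X : Type) (A : finType) (iota : A -> X) (C : opset A) n (g : op X n) :
  (forall k (B : 'I_k -> ('I_n.+1 -> X)),
     exists f, lift_opset iota C n f /\ forall j, f (B j) = g (B j)) ->
  lift_opset iota C n g.
Proof.
move=> Hg.
have [f [[c Cc fc] fg]] :=
  Hg _ (fun (j : 'I_#|{ffun 'I_n.+1 -> A}|) i => iota (enum_val j i)).
exists c => // a; have := fg (enum_rank [ffun i => a i]); rewrite enum_rankK.
have -> : (fun i => iota ([ffun i => a i] i)) = (fun i => iota (a i)).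
  by apply: functional_extensionality => i; rewrite ffunE.
by move=> <-.
Qed.

Lemma lift_opset_local_clone (X : Type) (A : finType) (iota : A -> X) (C : opset A) :
  is_clone C -> is_local_clone (lift_opset iota C).
Proof.
by move=> HC; split; [exact: lift_opset_clone | exact: lift_opset_closed].
Qed.

Theorem proposition2p2 (X : Type) (e : nat -> X) (e_bij : bijective e)
  (A : finType) :
  exists (L U : opset X),
    is_local_clone L /\ is_local_clone U /\ opset_le L U /\
    exists phi : opset A -> opset X,
      (forall C, is_clone C ->
         is_local_clone (phi C) /\ opset_le L (phi C) /\ opset_le (phi C) U) /\
      (forall D, is_local_clone D -> opset_le L D -> opset_le D U ->
         exists C, is_clone C /\ opset_eq (phi C) D) /\
      (forall C D, is_clone C -> is_clone D ->
         (opset_le C D <-> opset_le (phi C) (phi D))).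
Proof.
pose iota (a : A) := e (enum_rank a).
have iota_inj : injective iota.
  by move=> a b /(bij_inj e_bij)/val_inj/enum_rank_inj.
have L_le C : is_clone C -> opset_le (lift_opset iota (@proj_opset A)) (lift_opset iota C).
  by move/proj_opset_le_clone/lift_opset_le.
have le_U C : opset_le (lift_opset iota C) (lift_opset iota (@full_opset A)).
  exact: lift_opset_le.
exists (lift_opset iota (@proj_opset A)), (lift_opset iota (@full_opset A)).
split; first exact/lift_opset_local_clone/proj_opset_clone.
split; first exact/lift_opset_local_clone/full_opset_clone.
split; first exact: le_U.
exists (lift_opset iota); split; last split.
- by move=> C HC; split; [exact: lift_opset_local_clone | split; [exact: L_le |]].
- move=> D [HD _] LD DU; exists (restrict_opset iota D).
  split; first exact: restrict_opset_clone.
  by move=> n f; split; [apply: lift_restrict_le | apply: le_lift_restrict].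
- by move=> C D _ _; exact: lift_opset_le_iff iota_inj (e 0) C D.
Qed.
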